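(* Let $q\neq-1$ be real and let $n,m\ge0$ be integers. Then $$\sum_{j=0}^{n}(-1)^jq^{\binom{j}{2}}\begin{bmatrix} n\\ j\end{bmatrix}\prod_{i=n+m+1-j}^{n+m}(1+q^i)\;T_{2n+m-j}(1,s,q)=q^{n^2+mn}s^n\,T_m(1,s,q).$$
   Context: $T_0=1$, $T_1=x$, $T_n(x,s,q)=(1+q^{n-1})x\,T_{n-1}(x,s,q)+q^{n-1}s\,T_{n-2}(x,s,q)$ for $n\ge2$; $T_n(1,s,q)$ is its value at $x=1$. Notation: $[m]=1+q+\cdots+q^{m-1}$, $[m]!=[1]\cdots[m]$, $\begin{bmatrix} m\\ j\end{bmatrix}=\frac{[m]!}{[j]![m-j]!}$; empty products equal $1$. *)

From mathcomp Require Import all_boot all_order all_algebra.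
Set Implicit Arguments. Unset Strict Implicit. Unset Printing Implicit Defensive.
Import Order.TTheory GRing.Theory Num.Theory.
Local Open Scope ring_scope.

(* T_0 = 1, T_1 = x,
   T_n = (1 + q^(n-1)) x T_(n-1) + q^(n-1) s T_(n-2)  for n >= 2.
   Tpair n = (T_n, T_(n+1)). *)
Fixpoint Tpair (R : ringType) (x s q : R) (n : nat) : R * R :=
  match n with
  | 0%N => (1, x)
  | k.+1 => let p := Tpair x s q k in
            (p.2, (1 + q ^+ k.+1) * x * p.2 + q ^+ k.+1 * s * p.1)
  end.

Definition T (R : ringType) (n : nat) (x s q : R) : R := (Tpair x s q n).1.

Definition qint (R : ringType) (q : R) (m : nat) : R := \sum_(i < m) q ^+ i.
Definition qfact (R : ringType) (q : R) (m : nat) : R :=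
  \prod_(1 <= i < m.+1) qint q i.
Definition qbinom (R : fieldType) (q : R) (m j : nat) : R :=
  qfact q m / (qfact q j * qfact q (m - j)).

(* Induction on n, for all m at once.  Write L(n, m) for the left-hand side
   ([alt_sum n m]).
   With the q-binomials extended by zero beyond n, the q-Pascal rule and the
   ratio rule [n, j+1] (1 - q^(j+1)) = [n, j] (1 - q^(n-j)) give a recursion
   for the coefficients which sums to
     L(n+1, m) = L(n, m+2) - q^n (1 + q^(m+1)) L(n, m+1).
   By induction the right-hand side is q^(n^2+(m+1)n+n) s^n times
   T_(m+2) - (1 + q^(m+1)) T_(m+1) = q^(m+1) s T_m, which is the claim for n+1.
   The hypothesis q <> -1 makes every [k] (k > 0) nonzero, so the q-binomials
   can be manipulated as fractions. *)

From mathcomp Require Import all_boot all_order all_algebra.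
From mathcomp Require Import ring zify.
Import Order.TTheory GRing.Theory Num.Theory.
Set Implicit Arguments. Unset Strict Implicit.
Local Open Scope ring_scope.

Lemma T_recurrence (R : nzRingType) (x s q : R) k :
  T k.+2 x s q = (1 + q ^+ k.+1) * x * T k.+1 x s q + q ^+ k.+1 * s * T k x s q.
Proof. by []. Qed.

Section QInteger.
Variables (R : comNzRingType) (q : R).

Lemma qint0 : qint q 0 = 0.
Proof. by rewrite /qint big_ord0. Qed.

Lemma qintS k : qint q k.+1 = qint q k + q ^+ k.
Proof. by rewrite /qint big_ord_recr. Qed.

Lemma qintD a b : qint q (a + b) = qint q a + q ^+ a * qint q b.
Proof.
elim: b => [|b IHb]; first by rewrite addn0 qint0 mulr0 addr0.
by rewrite addnS !qintS IHb exprD; ring.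
Qed.

Lemma qint_mul1B k : qint q k * (1 - q) = 1 - q ^+ k.
Proof.
elim: k => [|k IHk]; first by rewrite qint0 mul0r expr0 subrr.
by rewrite qintS mulrDl IHk exprS; ring.
Qed.

Lemma qfact0 : qfact q 0 = 1.
Proof. by rewrite /qfact big_geq. Qed.

Lemma qfactS k : qfact q k.+1 = qfact q k * qint q k.+1.
Proof. by rewrite /qfact big_nat_recr. Qed.

Definition qfall M j := \prod_(M.+1 - j <= i < M.+1) (1 + q ^+ i).

Lemma qfall0 M : qfall M 0 = 1.
Proof. by rewrite /qfall subn0 big_geq. Qed.

Lemma qfallS M j : (j <= M)%N -> qfall M j.+1 = (1 + q ^+ (M - j)) * qfall M j.
Proof. by move=> le_jM; rewrite /qfall subSS big_ltn ?subSn //; lia. Qed.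

Lemma qfallSS M j : (j <= M.+1)%N -> qfall M.+1 j.+1 = qfall M j * (1 + q ^+ M.+1).
Proof. by move=> le_jM; rewrite /qfall subSS big_nat_recr //=; lia. Qed.

End QInteger.

Section QBinomial.
Variables (R : realFieldType) (q : R).
Hypothesis qN1 : q != -1.

Lemma qint_neq0 k : (0 < k)%N -> qint q k != 0.
Proof.
move=> k_gt0; have [->|q_neq1] := eqVneq q 1.
  rewrite /qint (eq_bigr (fun=> 1)) => [|i _]; last by rewrite expr1n.
  by rewrite sumr_const card_ord pnatr_eq0 -lt0n.
apply: contra qN1 => /eqP qk0.
have /eqP : `|q| ^+ k = 1.
  have /eqP := qint_mul1B q k; rewrite qk0 mul0r eq_sym subr_eq0 => /eqP qk1.
  by rewrite -normrX -qk1 normr1.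
rewrite pexpr_eq1 ?normr_ge0 -?lt0n // => /eqP.
have [q_ge0|q_lt0] := lerP 0 q.
  by rewrite ger0_norm // => q1; rewrite q1 eqxx in q_neq1.
by rewrite ltr0_norm // => /eqP; rewrite eqr_oppLR.
Qed.

Lemma qfact_neq0 k : qfact q k != 0.
Proof.
elim: k => [|k IHk]; first by rewrite qfact0 oner_neq0.
by rewrite qfactS mulf_neq0 // qint_neq0.
Qed.

(* [qbinom q n j] itself is not 0 for j > n, because n - j truncates to 0. *)
Definition qbinom_trunc n j := if (j <= n)%N then qbinom q n j else 0.

Lemma qbinom_trunc0 n : qbinom_trunc n 0 = 1.
Proof. by rewrite /qbinom_trunc /qbinom subn0 qfact0 mul1r divff ?qfact_neq0. Qed.

Lemma qbinom_trunc_gt n j : (n < j)%N -> qbinom_trunc n j = 0.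
Proof. by rewrite /qbinom_trunc ltnNge => /negbTE ->. Qed.

Lemma qbinom_trunc_nn n : qbinom_trunc n n = 1.
Proof.
by rewrite /qbinom_trunc leqnn /qbinom subnn qfact0 mulr1 divff ?qfact_neq0.
Qed.

Lemma qbinom_truncS n j : (j <= n)%N ->
  qbinom_trunc n.+1 j.+1 = qbinom_trunc n j.+1 + q ^+ (n - j) * qbinom_trunc n j.
Proof.
rewrite leq_eqVlt => /predU1P[->|lt_jn].
  by rewrite (qbinom_trunc_gt (ltnSn _)) subnn mul1r add0r !qbinom_trunc_nn.
have [k ->] : exists k, n = (j + k).+1 by exists (n - j.+1)%N; lia.
rewrite /qbinom_trunc /qbinom !ifT; try lia.
rewrite (_ : ((j + k).+2 - j.+1 = k.+1)%N); last by lia.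
rewrite (_ : ((j + k).+1 - j.+1 = k)%N); last by lia.
rewrite (_ : ((j + k).+1 - j = k.+1)%N); last by lia.
have qint_split : qint q (j + k).+2 = qint q k.+1 + q ^+ k.+1 * qint q j.+1.
  by rewrite -qintD; congr qint; lia.
rewrite !qfactS qint_split.
by field; rewrite !qfact_neq0 !qint_neq0.
Qed.

Lemma qbinom_trunc_ratio n j :
  qbinom_trunc n j.+1 * (1 - q ^+ j.+1) = qbinom_trunc n j * (1 - q ^+ (n - j)).
Proof.
have [le_nj|lt_jn] := leqP n j.
  rewrite qbinom_trunc_gt ?ltnS // mul0r.
  move: le_nj; rewrite leq_eqVlt => /predU1P[->|lt_nj].
    by rewrite subnn subrr mulr0.
  by rewrite qbinom_trunc_gt // mul0r.
have [k ->] : exists k, n = (j + k).+1 by exists (n - j.+1)%N; lia.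
rewrite /qbinom_trunc /qbinom !ifT; try lia.
rewrite (_ : ((j + k).+1 - j.+1 = k)%N); last by lia.
rewrite (_ : ((j + k).+1 - j = k.+1)%N); last by lia.
rewrite -!qint_mul1B !qfactS.
by field; rewrite !qfact_neq0 !qint_neq0.
Qed.

End QBinomial.

Section AlternatingSum.
Variables (R : realFieldType) (q s : R).
Hypothesis qN1 : q != -1.

Definition alt_coef n M j :=
  (-1) ^+ j * q ^+ 'C(j, 2) * qbinom_trunc q n j * qfall q M j.

Lemma alt_coefS n m j : (j <= n)%N ->
  alt_coef n.+1 (n + m).+1 j.+1 =
  alt_coef n (n + m).+2 j.+1 - q ^+ n * (1 + q ^+ m.+1) * alt_coef n (n + m).+1 j.
Proof.
move=> le_jn; have ratio := qbinom_trunc_ratio qN1 n j.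
rewrite /alt_coef qfallS ?qfallSS ?qbinom_truncS //; try lia.
rewrite binS bin1 exprD.
rewrite (_ : ((n + m).+1 - j = (n - j) + m.+1)%N); last by lia.
rewrite (_ : ((n + m).+2 = j + (n - j) + m.+1 + 1)%N); last by lia.
rewrite -[in q ^+ n](subnKC le_jn) !exprD exprS in ratio *.
set b1 := qbinom_trunc q n j.+1 in ratio *; set b0 := qbinom_trunc q n j in ratio *.
apply/eqP; rewrite -subr_eq0 exprS; apply/eqP.
transitivity (- (-1) ^+ j * q ^+ 'C(j, 2) * qfall q (n + m).+1 j
    * q ^+ j * q ^+ (n - j) * q ^+ m.+1
    * (b1 * (1 - q * q ^+ j) - b0 * (1 - q ^+ (n - j)))); first by ring.
by rewrite ratio subrr mulr0.
Qed.

Definition alt_sum n m :=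
  \sum_(j < n.+1) alt_coef n (n + m) j * T (2 * n + m - j) 1 s q.

Lemma alt_sumS n m :
  alt_sum n.+1 m = alt_sum n m.+2 - q ^+ n * (1 + q ^+ m.+1) * alt_sum n m.+1.
Proof.
have alt_sum_ext : alt_sum n m.+2 =
    \sum_(j < n.+2) alt_coef n (n + m.+2) j * T (2 * n + m.+2 - j) 1 s q.
  by rewrite [RHS]big_ord_recr /= /alt_coef qbinom_trunc_gt // mulr0 !mul0r addr0.
rewrite alt_sum_ext /alt_sum big_ord_recl [X in _ = X - _]big_ord_recl mulr_sumr.
rewrite -addrA -sumrB; congr (_ + _).
  rewrite /alt_coef !qbinom_trunc0 //= !qfall0.
  by rewrite (_ : 2 * n.+1 + m = 2 * n + m.+2)%N //; lia.
apply: eq_bigr => j _; rewrite !lift0 /=.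
have le_jn : (j <= n)%N by rewrite -ltnS.
rewrite addSn !addnS alt_coefS //.
rewrite (_ : (2 * n.+1 + m - j.+1 = (2 * n + m).+1 - j)%N); last by lia.
rewrite (_ : ((2 * n + m).+2 - j.+1 = (2 * n + m).+1 - j)%N); last by lia.
ring.
Qed.

Lemma alt_sumE n m : alt_sum n m = q ^+ (n ^ 2 + m * n) * s ^+ n * T m 1 s q.
Proof.
elim: n m => [|n IHn] m.
  rewrite /alt_sum big_ord1 /alt_coef qbinom_trunc0 //= qfall0.
  by rewrite !muln0 add0n addn0 subn0 !expr0 !mul1r.
rewrite alt_sumS !IHn T_recurrence !mulr1.
rewrite (_ : (n.+1 ^ 2 + m * n.+1 = n ^ 2 + m.+1 * n + n + m.+1)%N); last by lia.
rewrite (_ : (n ^ 2 + m.+2 * n = n ^ 2 + m.+1 * n + n)%N); last by lia.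
by rewrite !exprD !exprS; ring.
Qed.

End AlternatingSum.

Theorem theorem3p2 (R : realFieldType) (q s : R) (hq : q != -1) (n m : nat) :
  \sum_(0 <= j < n.+1)
     (-1) ^+ j * q ^+ 'C(j, 2) * qbinom q n j
     * (\prod_((n + m).+1 - j <= i < (n + m).+1) (1 + q ^+ i))
     * T (2 * n + m - j) 1 s q
  = q ^+ (n ^ 2 + m * n) * s ^+ n * T m 1 s q.
Proof.
rewrite -(alt_sumE s hq) /alt_sum big_mkord; apply: eq_bigr => j _.
by rewrite /alt_coef /qbinom_trunc -ltnS ltn_ord.
Qed.
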